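(* Let $M\in\mathbb N$, $a_1,\dots,a_M>0$, and functions $\phi_{i,j}$ ($i=1,2$, $j=1,\dots,M$) with $\phi_{i,j}\in\mathcal V_{a_j}$. Let $a:=\sum_{j=1}^Ma_j$ and $b>a$, and set $b_j:=b-\sum_{k\ne j}a_k$. Then $$\theta_b\Big(\prod_{j=1}^M\phi_{1,j},\ \prod_{j=1}^M\phi_{2,j}\Big)\le\sum_{j=1}^M\theta_{b_j}(\phi_{1,j},\phi_{2,j}).$$
   Context: $\mathbb T=\mathbb R/\mathbb Z$. $\mathcal V_a:=\{\psi\in C^2(\mathbb T,(0,\infty)):|\frac d{dx}\log\psi|<a\}$ (so $\mathcal V_a\subset\mathcal V_{a'}$ for $a\le a'$). For $\psi_1,\psi_2\in\mathcal V_a$, $\beta_a(\psi_1,\psi_2):=\inf\{t>0:t\psi_1-\psi_2\in\mathcal V_a\}$ and $\theta_a(\psi_1,\psi_2):=\log\beta_a(\psi_1,\psi_2)+\log\beta_a(\psi_2,\psi_1)$. *)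

From Stdlib Require Import Reals.
From Coquelicot Require Import Coquelicot.
Open Scope R_scope.

(* Functions on T = R/Z are represented as 1-periodic functions R -> R. *)
Definition periodic1 (f : R -> R) : Prop := forall x, f (x + 1) = f x.

Definition C2 (f : R -> R) : Prop :=
  (forall x, ex_derive f x) /\
  (forall x, ex_derive (Derive f) x) /\
  (forall x, continuous (Derive_n f 2) x).

Definition C2pos_T (psi : R -> R) : Prop :=
  periodic1 psi /\ C2 psi /\ (forall x, 0 < psi x).

Definition V (a : R) (psi : R -> R) : Prop :=
  C2pos_T psi /\ forall x, Rabs (Derive (fun y => ln (psi y)) x) < a.

Definition beta (a : R) (psi1 psi2 : R -> R) : R :=
  real (Glb_Rbar (fun t => 0 < t /\ V a (fun x => t * psi1 x - psi2 x))).

Definition theta (a : R) (psi1 psi2 : R -> R) : R :=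
  ln (beta a psi1 psi2) + ln (beta a psi2 psi1).

Fixpoint sumR (n : nat) (g : nat -> R) : R :=
  match n with O => 0 | S m => sumR m g + g m end.
Fixpoint prodR (n : nat) (g : nat -> R) : R :=
  match n with O => 1 | S m => prodR m g * g m end.

From Stdlib Require Import Reals Lra Lia ZArith FunctionalExtensionality Classical.
From Coquelicot Require Import Coquelicot.
Open Scope R_scope.

(* Put d := b - sum_j a_j and let beta_j := beta_{a_j + d}(phi_{1,j}, phi_{2,j}); note b_j = a_j + d.
   Work in the cone [Vbar c] of nonnegative periodic C^2 functions with |h'| <= c h, which
   satisfies [Vbar c * Vbar c' ⊆ Vbar (c + c')].  If t_j > beta_j, then t_j phi_{1,j} - phi_{2,j}
   lies in V_{a_j + d}, and the telescoping identity
     prod_j f_j - prod_j g_j = (prod_{j<n} f_j - prod_{j<n} g_j) f_n + prod_{j<n} g_j (f_n - g_n)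
   puts prod_j t_j phi_{1,j} - prod_j phi_{2,j} in Vbar (sum_j a_j + d) = Vbar b.  Adding a small
   positive multiple of prod_j t_j phi_{1,j}, which lies in the smaller cone Vbar (sum_j a_j),
   lands in V_b.  Hence beta_b(prod phi_1, prod phi_2) <= lambda prod_j t_j for all lambda > 1 and
   t_j > beta_j, so it is at most prod_j beta_j; taking logarithms in both orders bounds theta.  That each beta_j is a positive real number uses
   compactness of the circle: for a < c and t large, t f - g lies in V_c. *)

Lemma continuous_Rplus (f g : R -> R) x :
  continuous f x -> continuous g x -> continuous (fun y => f y + g y) x.
Proof. intros; now apply (continuous_plus f g). Qed.

Lemma continuous_Rmult (f g : R -> R) x :
  continuous f x -> continuous g x -> continuous (fun y => f y * g y) x.
Proof. intros; now apply (continuous_mult f g). Qed.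

Definition has_derive2 (h h1 h2 : R -> R) : Prop :=
  (forall x, is_derive h x (h1 x)) /\ (forall x, is_derive h1 x (h2 x)) /\
  (forall x, continuous h2 x).

Lemma C2_has_derive2 h : C2 h -> has_derive2 h (Derive h) (Derive (Derive h)).
Proof.
  intros [H1 [H2 H3]]; split; [|split]; auto.
  - intro x; now apply Derive_correct.
  - intro x; now apply Derive_correct.
Qed.

Lemma has_derive2_C2 h h1 h2 : has_derive2 h h1 h2 -> C2 h.
Proof.
  intros [H1 [H2 H3]].
  assert (E1 : Derive h = h1).
  { apply functional_extensionality; intro; now apply is_derive_unique. }
  assert (E2 : Derive h1 = h2).
  { apply functional_extensionality; intro; now apply is_derive_unique. }
  split; [|split]; intro x.
  - eexists; apply H1.
  - rewrite E1; eexists; apply H2.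
  - change (continuous (Derive (Derive h)) x); rewrite E1, E2; apply H3.
Qed.

Lemma has_derive2_continuous h h1 h2 :
  has_derive2 h h1 h2 -> forall x, continuous h x /\ continuous h1 x.
Proof.
  intros [H1 [H2 _]] x; split;
    apply (@ex_derive_continuous R_AbsRing R_NormedModule); eexists; eauto.
Qed.

Lemma has_derive2_const c : has_derive2 (fun _ => c) (fun _ => 0) (fun _ => 0).
Proof.
  split; [|split]; intro x.
  - apply (is_derive_const c).
  - apply (is_derive_const 0).
  - apply continuous_const.
Qed.

Lemma has_derive2_plus f f1 f2 g g1 g2 : has_derive2 f f1 f2 -> has_derive2 g g1 g2 ->
  has_derive2 (fun x => f x + g x) (fun x => f1 x + g1 x) (fun x => f2 x + g2 x).
Proof.
  intros [F1 [F2 F3]] [G1 [G2 G3]]; split; [|split]; intro x.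
  - apply (is_derive_plus f g); auto.
  - apply (is_derive_plus f1 g1); auto.
  - now apply continuous_Rplus.
Qed.

Lemma has_derive2_mult f f1 f2 g g1 g2 : has_derive2 f f1 f2 -> has_derive2 g g1 g2 ->
  has_derive2 (fun x => f x * g x) (fun x => f1 x * g x + f x * g1 x)
    (fun x => (f2 x * g x + f1 x * g1 x) + (f1 x * g1 x + f x * g2 x)).
Proof.
  intros HF HG.
  pose proof (has_derive2_continuous _ _ _ HF) as CF.
  pose proof (has_derive2_continuous _ _ _ HG) as CG.
  destruct HF as [F1 [F2 F3]], HG as [G1 [G2 G3]].
  assert (Dmult : forall u v du dv x, is_derive u x du -> is_derive v x dv ->
    is_derive (fun y => u y * v y) x (du * v x + u x * dv)).
  { intros; apply (is_derive_mult u v); auto; intros; apply Rmult_comm. }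
  split; [|split]; intro x.
  - now apply Dmult.
  - apply (is_derive_plus (fun y => f1 y * g y) (fun y => f y * g1 y)); now apply Dmult.
  - destruct (CF x), (CG x).
    repeat apply continuous_Rplus; apply continuous_Rmult; auto.
Qed.

Lemma C2_const c : C2 (fun _ => c).
Proof. eapply has_derive2_C2, has_derive2_const. Qed.

Lemma C2_plus f g : C2 f -> C2 g -> C2 (fun x => f x + g x).
Proof. intros; eapply has_derive2_C2, has_derive2_plus; apply C2_has_derive2; eauto. Qed.

Lemma C2_mult f g : C2 f -> C2 g -> C2 (fun x => f x * g x).
Proof. intros; eapply has_derive2_C2, has_derive2_mult; apply C2_has_derive2; eauto. Qed.

Lemma C2_scal t f : C2 f -> C2 (fun x => t * f x).
Proof. intro; apply (C2_mult (fun _ => t)); auto using C2_const. Qed.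

Lemma C2_minus f g : C2 f -> C2 g -> C2 (fun x => f x - g x).
Proof.
  intros Cf Cg.
  replace (fun x => f x - g x) with (fun x => f x + -1 * g x)
    by (apply functional_extensionality; intro; ring).
  now apply C2_plus, C2_scal.
Qed.

Lemma C2_ex_derive f : C2 f -> forall x, ex_derive f x.
Proof. now intros [H _]. Qed.

Lemma C2_continuous f : C2 f -> forall x, continuous f x /\ continuous (Derive f) x.
Proof. intro Cf; exact (has_derive2_continuous _ _ _ (C2_has_derive2 f Cf)). Qed.

Lemma Derive_ln_comp h : C2 h -> (forall x, 0 < h x) ->
  forall x, Derive (fun y => ln (h y)) x = Derive h x / h x.
Proof.
  intros Ch Hpos x; apply is_derive_unique.
  apply (is_derive_comp ln h); [apply is_derive_ln, Hpos | apply Derive_correct, C2_ex_derive, Ch].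
Qed.

Lemma V_iff c h : V c h <->
  periodic1 h /\ C2 h /\ (forall x, 0 < h x) /\ (forall x, Rabs (Derive h x) < c * h x).
Proof.
  assert (Hq : C2 h -> (forall x, 0 < h x) -> forall x,
    Rabs (Derive (fun y => ln (h y)) x) < c <-> Rabs (Derive h x) < c * h x).
  { intros Ch Hpos x; pose proof (Hpos x).
    rewrite Derive_ln_comp, Rabs_div, (Rabs_pos_eq (h x)), Rlt_div_l; auto; try tauto; lra. }
  split.
  - intros [[P [Ch Hpos]] D]; do 3 (split; auto); intro x; now apply Hq.
  - intros [P [Ch [Hpos D]]]; split; [now split|]; intro x; now apply Hq.
Qed.

Lemma V_ext c f g : (forall x, f x = g x) -> V c f -> V c g.
Proof. intros E; replace g with f; auto; now apply functional_extensionality. Qed.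

Lemma V_pos c f : V c f -> forall x, 0 < f x.
Proof. now intros [[_ [_ P]] _]. Qed.

Definition Vbar (c : R) (h : R -> R) : Prop :=
  periodic1 h /\ C2 h /\ (forall x, 0 <= h x) /\ (forall x, Rabs (Derive h x) <= c * h x).

Lemma V_Vbar c h : V c h -> Vbar c h.
Proof.
  intro Hh; apply V_iff in Hh; destruct Hh as [P [Ch [Hpos D]]].
  split; [|split; [|split]]; auto; intro x; [apply Rlt_le, Hpos | apply Rlt_le, D].
Qed.

Lemma Vbar_ext c f g : (forall x, f x = g x) -> Vbar c f -> Vbar c g.
Proof. intros E; replace g with f; auto; now apply functional_extensionality. Qed.

Lemma Vbar_const c t : 0 <= c -> 0 <= t -> Vbar c (fun _ => t).
Proof.
  intros Hc Ht; split; [|split; [|split]]; auto using C2_const.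
  - intro; reflexivity.
  - intro x; rewrite Derive_const, Rabs_R0; now apply Rmult_le_pos.
Qed.

Lemma Vbar_plus c f g : Vbar c f -> Vbar c g -> Vbar c (fun x => f x + g x).
Proof.
  intros [Pf [Cf [Hf Df]]] [Pg [Cg [Hg Dg]]]; split; [|split; [|split]].
  - intro x; now rewrite Pf, Pg.
  - now apply C2_plus.
  - intro x; specialize (Hf x); specialize (Hg x); lra.
  - intro x; rewrite Derive_plus by now apply C2_ex_derive.
    specialize (Df x); specialize (Dg x).
    pose proof (Rabs_triang (Derive f x) (Derive g x)); lra.
Qed.

Lemma Vbar_mult c d f g : Vbar c f -> Vbar d g -> Vbar (c + d) (fun x => f x * g x).
Proof.
  intros [Pf [Cf [Hf Df]]] [Pg [Cg [Hg Dg]]]; split; [|split; [|split]].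
  - intro x; now rewrite Pf, Pg.
  - now apply C2_mult.
  - intro x; apply Rmult_le_pos; auto.
  - intro x; rewrite Derive_mult by now apply C2_ex_derive.
    specialize (Df x); specialize (Dg x); specialize (Hf x); specialize (Hg x).
    pose proof (Rabs_triang (Derive f x * g x) (f x * Derive g x)) as T.
    rewrite !Rabs_mult, (Rabs_pos_eq (g x)), (Rabs_pos_eq (f x)) in T by auto.
    assert (Rabs (Derive f x) * g x <= c * f x * g x) by (apply Rmult_le_compat_r; auto).
    assert (f x * Rabs (Derive g x) <= f x * (d * g x)) by (apply Rmult_le_compat_l; auto).
    lra.
Qed.

Lemma Vbar_scal c t f : 0 <= t -> Vbar c f -> Vbar c (fun x => t * f x).
Proof.
  intros Ht Hf; replace c with (0 + c) by ring.
  apply (Vbar_mult 0 c (fun _ => t) f); auto; apply Vbar_const; lra.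
Qed.

Lemma V_Vbar_plus c c' f g : c < c' -> Vbar c f -> (forall x, 0 < f x) -> Vbar c' g ->
  V c' (fun x => f x + g x).
Proof.
  intros Hc [Pf [Cf [_ Df]]] Hf [Pg [Cg [Hg Dg]]]; apply V_iff; split; [|split; [|split]].
  - intro x; now rewrite Pf, Pg.
  - now apply C2_plus.
  - intro x; specialize (Hf x); specialize (Hg x); lra.
  - intro x; rewrite Derive_plus by now apply C2_ex_derive.
    specialize (Df x); specialize (Dg x).
    assert (c * f x < c' * f x) by (apply Rmult_lt_compat_r; auto).
    pose proof (Rabs_triang (Derive f x) (Derive g x)); lra.
Qed.

Lemma periodic1_shift_nat F : periodic1 F -> forall n x, F (x + INR n) = F x.
Proof.
  intros P n; induction n as [|n IH]; intro x.
  - simpl INR; now rewrite Rplus_0_r.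
  - rewrite S_INR, <- Rplus_assoc, P; apply IH.
Qed.

Lemma periodic1_shift F : periodic1 F -> forall z x, F (x + IZR z) = F x.
Proof.
  intros P z x; destruct (Z.le_ge_cases 0 z) as [Hz|Hz].
  - rewrite <- (Z2Nat.id z), <- INR_IZR_INZ by exact Hz; now apply periodic1_shift_nat.
  - rewrite <- (Z.opp_involutive z), <- (Z2Nat.id (- z)), opp_IZR, <- INR_IZR_INZ by lia.
    rewrite <- (periodic1_shift_nat F P (Z.to_nat (- z))); f_equal; ring.
Qed.

Lemma periodic1_reduce F : periodic1 F -> forall x, exists y, 0 <= y <= 1 /\ F x = F y.
Proof.
  intros P x; destruct (archimed x) as [H1 H2].
  exists (x - IZR (up x) + 1); split; [lra|].
  rewrite <- (periodic1_shift F P (up x - 1) (x - IZR (up x) + 1)), minus_IZR; f_equal; ring.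
Qed.

Lemma periodic1_Derive f : periodic1 f -> periodic1 (Derive f).
Proof.
  intros P x; unfold Derive; f_equal; apply Lim_ext; intro h.
  now rewrite P, Rplus_assoc, (Rplus_comm 1), <- Rplus_assoc, P.
Qed.

Lemma periodic1_max F : periodic1 F -> (forall x, continuous F x) ->
  exists y, forall x, F x <= F y.
Proof.
  intros P CF.
  destruct (continuity_ab_maj F 0 1) as [y [Hy _]]; [lra| |].
  - intros c _; apply continuity_pt_filterlim, CF.
  - exists y; intro x; destruct (periodic1_reduce F P x) as [z [Hz ->]]; auto.
Qed.

Lemma periodic1_min F : periodic1 F -> (forall x, continuous F x) ->
  exists y, forall x, F y <= F x.
Proof.
  intros P CF.
  destruct (continuity_ab_min F 0 1) as [y [Hy _]]; [lra| |].
  - intros c _; apply continuity_pt_filterlim, CF.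
  - exists y; intro x; destruct (periodic1_reduce F P x) as [z [Hz ->]]; auto.
Qed.

Lemma V_bounds a f : V a f ->
  exists m fmin, 0 <= m < a /\ 0 < fmin /\
    forall x, Rabs (Derive f x) <= m * f x /\ fmin <= f x.
Proof.
  intro Hf; apply V_iff in Hf; destruct Hf as [P [Cf [Hpos D]]].
  pose proof (C2_continuous f Cf) as Cont.
  set (F := fun x => Rabs (Derive f x) / f x).
  destruct (periodic1_max F) as [y0 Hy0].
  { intro x; unfold F; now rewrite (periodic1_Derive f P), P. }
  { intro x; apply continuous_Rmult.
    - apply continuous_Rabs_comp, Cont.
    - apply continuous_Rinv_comp; [apply Cont | specialize (Hpos x); lra]. }
  destruct (periodic1_min f P (fun x => proj1 (Cont x))) as [y1 Hy1].
  assert (HF : forall x, Rabs (Derive f x) <= F y0 * f x).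
  { intro x; apply Rle_div_l; [apply Hpos | apply Hy0]. }
  exists (F y0), (f y1); split; [split|split]; auto.
  - apply (Rmult_le_reg_r (f y0)); [apply Hpos|].
    rewrite Rmult_0_l; apply Rle_trans with (2 := HF y0), Rabs_pos.
  - apply Rlt_div_l; [apply Hpos | apply D].
Qed.

Lemma V_scal_sub_exists a c f g : V a f -> V a g -> a < c ->
  exists t, 0 < t /\ V c (fun x => t * f x - g x).
Proof.
  intros Hf Hg Hac.
  destruct (V_bounds a f Hf) as [m [fmin [Hm [Hfmin Bf]]]].
  apply V_iff in Hf; destruct Hf as [Pf [Cf [Hfpos _]]].
  apply V_iff in Hg; destruct Hg as [Pg [Cg [Hgpos _]]].
  pose proof (C2_continuous g Cg) as Cont.
  destruct (periodic1_max (fun x => Rabs (Derive g x) + c * g x)) as [y Hy].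
  { intro x; now rewrite (periodic1_Derive g Pg), Pg. }
  { intro x; apply continuous_Rplus.
    - apply continuous_Rabs_comp, Cont.
    - apply continuous_Rmult; [apply continuous_const | apply Cont]. }
  set (K := Rabs (Derive g y) + c * g y) in Hy.
  assert (HK : 0 <= K).
  { apply Rplus_le_le_0_compat; [apply Rabs_pos | apply Rmult_le_pos; [lra | apply Rlt_le, Hgpos]]. }
  set (t := (K + 1) / ((c - m) * fmin)).
  assert (Ht : 0 < t) by (apply Rdiv_lt_0_compat; [lra | apply Rmult_lt_0_compat; lra]).
  assert (Htm : t * ((c - m) * fmin) = K + 1) by (unfold t; field; lra).
  assert (Hderiv : forall x, Rabs (t * Derive f x - Derive g x) < c * (t * f x - g x)).
  { intro x; destruct (Bf x) as [B1 B2]; specialize (Hy x).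
    pose proof (Rabs_triang (t * Derive f x) (- Derive g x)) as T.
    rewrite Rabs_mult, Rabs_Ropp, (Rabs_pos_eq t) in T by lra.
    assert (t * Rabs (Derive f x) <= t * (m * f x)) by (apply Rmult_le_compat_l; lra).
    assert (t * ((c - m) * fmin) <= t * ((c - m) * f x)) by
      (apply Rmult_le_compat_l; [lra | apply Rmult_le_compat_l; lra]).
    unfold Rminus at 1; lra. }
  exists t; split; auto; apply V_iff; split; [|split; [|split]].
  - intro x; now rewrite Pf, Pg.
  - apply C2_minus; [apply C2_scal|]; assumption.
  - intro x; apply (Rmult_lt_reg_l c); [lra|]; rewrite Rmult_0_r.
    apply Rle_lt_trans with (2 := Hderiv x), Rabs_pos.
  - intro x; rewrite Derive_minus, Derive_scal; auto.
    + apply C2_ex_derive, C2_scal, Cf.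
    + apply C2_ex_derive, Cg.
Qed.

Lemma real_Glb_Rbar_spec (E : R -> Prop) x0 l : E x0 -> (forall x, E x -> l <= x) ->
  l <= real (Glb_Rbar E) /\ (forall x, E x -> real (Glb_Rbar E) <= x) /\
  (forall y, real (Glb_Rbar E) < y -> exists x, E x /\ x < y).
Proof.
  intros H0 Hl; destruct (Glb_Rbar_correct E) as [Hlb Hglb].
  assert (Hle := Hglb (Finite l) Hl); pose proof (Hlb x0 H0) as Hx0.
  destruct (Glb_Rbar E) as [r| |]; simpl in *; try contradiction.
  split; [|split]; auto.
  intros y Hy; apply NNPP; intro Hno.
  assert (Hyr : Rbar_le (Finite y) (Finite r)).
  { apply Hglb; intros x Ex; simpl; apply Rnot_lt_le; intro Hxy; apply Hno; now exists x. }
  simpl in Hyr; lra.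
Qed.

Definition beta_set (c : R) (f g : R -> R) (t : R) : Prop :=
  0 < t /\ V c (fun x => t * f x - g x).

Lemma beta_set_lb c f g t : 0 < f 0 -> beta_set c f g t -> g 0 / f 0 < t.
Proof.
  intros Hf [_ Ht]; apply Rlt_div_l; auto.
  pose proof (V_pos _ _ Ht 0); lra.
Qed.

Lemma beta_spec c f g t0 : beta_set c f g t0 -> 0 < f 0 -> 0 < g 0 ->
  0 < beta c f g /\ (forall t, beta_set c f g t -> beta c f g <= t) /\
  (forall y, beta c f g < y -> exists t, beta_set c f g t /\ t < y).
Proof.
  intros Ht0 Hf Hg.
  change (beta c f g) with (real (Glb_Rbar (beta_set c f g))).
  destruct (real_Glb_Rbar_spec (beta_set c f g) t0 (g 0 / f 0)) as [Hl Hrest]; auto.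
  - intros t Ht; apply Rlt_le; now apply (beta_set_lb c).
  - split; auto; apply Rlt_le_trans with (2 := Hl), Rdiv_lt_0_compat; auto.
Qed.

Lemma beta_set_above a c f g : V a f -> V a g -> a < c ->
  0 < beta c f g /\ (forall t, beta c f g < t -> beta_set c f g t).
Proof.
  intros Hf Hg Hac.
  destruct (V_scal_sub_exists a c f g Hf Hg Hac) as [t0 Ht0].
  destruct (beta_spec c f g t0 Ht0 (V_pos _ _ Hf 0) (V_pos _ _ Hg 0)) as [Hpos [_ Happrox]].
  split; [exact Hpos|]; intros t Ht.
  destruct (Happrox t Ht) as [s [[Hs HVs] Hst]]; split; [lra|].
  apply (V_ext c (fun x => (t - s) * f x + (s * f x - g x))); [intro; ring|].
  apply (V_Vbar_plus a); auto using V_Vbar.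
  - apply Vbar_scal, V_Vbar; auto; lra.
  - intro x; apply Rmult_lt_0_compat; [lra | apply (V_pos _ _ Hf)].
Qed.

Lemma sumR_ext n u v : (forall j, (j < n)%nat -> u j = v j) -> sumR n u = sumR n v.
Proof.
  induction n as [|n IH]; intro H; simpl; auto.
  rewrite IH, H; auto; intros; apply H; lia.
Qed.

Lemma sumR_plus n u v : sumR n (fun j => u j + v j) = sumR n u + sumR n v.
Proof. induction n as [|n IH]; simpl; [ring | rewrite IH; ring]. Qed.

Lemma sumR_erase n u j : (j < n)%nat ->
  sumR n (fun k => if Nat.eqb k j then 0 else u k) = sumR n u - u j.
Proof.
  induction n as [|n IH]; intro Hj; [lia|]; simpl.
  destruct (Nat.eqb_spec n j) as [->|Hnj].
  - rewrite (sumR_ext _ _ u); [ring|].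
    intros k Hk; destruct (Nat.eqb_spec k j); [lia | reflexivity].
  - rewrite IH by lia; ring.
Qed.

Lemma prodR_mult n u v : prodR n (fun j => u j * v j) = prodR n u * prodR n v.
Proof. induction n as [|n IH]; simpl; [ring | rewrite IH; ring]. Qed.

Lemma prodR_pos n u : (forall j, (j < n)%nat -> 0 < u j) -> 0 < prodR n u.
Proof.
  induction n as [|n IH]; intro H; simpl; [lra|].
  apply Rmult_lt_0_compat; [apply IH; intros; apply H | apply H]; lia.
Qed.

Lemma ln_prodR n u : (forall j, (j < n)%nat -> 0 < u j) ->
  ln (prodR n u) = sumR n (fun j => ln (u j)).
Proof.
  induction n as [|n IH]; intro H; simpl; [apply ln_1|].
  rewrite ln_mult.
  - rewrite IH; auto; intros; apply H; lia.
  - apply prodR_pos; intros; apply H; lia.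
  - apply H; lia.
Qed.

Lemma prodR_mult_exp n u e : prodR n (fun j => u j * exp e) = prodR n u * exp (INR n * e).
Proof.
  induction n as [|n IH]; simpl prodR.
  - simpl INR; rewrite Rmult_0_l, exp_0; ring.
  - rewrite IH, S_INR, Rmult_plus_distr_r, Rmult_1_l, exp_plus; ring.
Qed.

Lemma Vbar_prodR n c f : (forall j, (j < n)%nat -> 0 <= c j /\ Vbar (c j) (f j)) ->
  Vbar (sumR n c) (fun x => prodR n (fun j => f j x)).
Proof.
  induction n as [|n IH]; intro H; simpl.
  - apply Vbar_const; lra.
  - apply (Vbar_mult _ _ (fun x => prodR n (fun j => f j x)) (f n)).
    + apply IH; intros; apply H; lia.
    + apply H; lia.
Qed.

Lemma Vbar_prodR_sub n c d f g : 0 <= d ->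
  (forall j, (j < n)%nat -> 0 <= c j /\ Vbar (c j) (f j) /\ Vbar (c j) (g j) /\
     Vbar (c j + d) (fun x => f j x - g j x)) ->
  Vbar (sumR n c + d) (fun x => prodR n (fun j => f j x) - prodR n (fun j => g j x)).
Proof.
  intros Hd; induction n as [|n IH]; intro H; simpl.
  - apply (Vbar_ext _ (fun _ => 0)); [intro; ring | apply Vbar_const; lra].
  - destruct (H n) as [Hc [Hf [Hg Hfg]]]; [lia|].
    assert (Hlt : forall j, (j < n)%nat -> (j < S n)%nat) by (intros; lia).
    set (F x := prodR n (fun j => f j x)); set (G x := prodR n (fun j => g j x)).
    apply (Vbar_ext _ (fun x => (F x - G x) * f n x + G x * (f n x - g n x)));
      [intro x; unfold F, G; ring|].
    apply Vbar_plus.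
    + replace (sumR n c + c n + d) with (sumR n c + d + c n) by ring.
      apply (Vbar_mult _ _ (fun x => F x - G x)); auto.
    + replace (sumR n c + c n + d) with (sumR n c + (c n + d)) by ring.
      apply (Vbar_mult _ _ G); auto.
      apply Vbar_prodR; intros j Hj; destruct (H j (Hlt j Hj)) as [? [_ [? _]]]; auto.
Qed.

Lemma le_of_le_exp_mul x y k : 0 < y -> 0 < k ->
  (forall e, 0 < e -> x <= exp (k * e) * y) -> x <= y.
Proof.
  intros Hy Hk H; apply Rnot_lt_le; intro Hxy.
  assert (Hxy' : 0 < x / y) by (apply Rdiv_lt_0_compat; lra).
  assert (HL : 0 < ln (x / y)).
  { rewrite <- ln_1; apply ln_increasing; [lra|]; apply Rlt_div_r; lra. }
  assert (He : 0 < ln (x / y) / (2 * k)) by (apply Rdiv_lt_0_compat; lra).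
  specialize (H _ He).
  replace (k * (ln (x / y) / (2 * k))) with (ln (x / y) / 2) in H by (field; lra).
  assert (Hexp : exp (ln (x / y) / 2) < x / y).
  { rewrite <- (exp_ln (x / y)) at 2 by exact Hxy'; apply exp_increasing; lra. }
  apply Rlt_div_r in Hexp; lra.
Qed.

Lemma beta_prodR_le M a phi1 phi2 b :
  (forall j, (j < M)%nat -> 0 < a j) ->
  (forall j, (j < M)%nat -> V (a j) (phi1 j) /\ V (a j) (phi2 j)) ->
  sumR M a < b ->
  0 < beta b (fun x => prodR M (fun j => phi1 j x)) (fun x => prodR M (fun j => phi2 j x))
    <= prodR M (fun j => beta (a j + (b - sumR M a)) (phi1 j) (phi2 j)).
Proof.
  intros Ha HV Hb.
  set (d := b - sumR M a).
  set (P1 x := prodR M (fun j => phi1 j x)); set (P2 x := prodR M (fun j => phi2 j x)).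
  set (be j := beta (a j + d) (phi1 j) (phi2 j)).
  assert (Hbe : forall j, (j < M)%nat -> 0 < be j /\
    forall t, be j < t -> beta_set (a j + d) (phi1 j) (phi2 j) t).
  { intros j Hj; destruct (HV j Hj); apply (beta_set_above (a j)); auto; unfold d; lra. }
  assert (Hphi1 : forall j x, (j < M)%nat -> 0 < phi1 j x).
  { intros j x Hj; eapply V_pos, HV, Hj. }
  assert (Hmem : forall e, 0 < e -> beta_set b P1 P2 (exp ((INR M + 1) * e) * prodR M be)).
  { intros e He.
    assert (He1 : 1 < exp e) by (rewrite <- exp_0; apply exp_increasing; lra).
    set (t j := be j * exp e).
    assert (Ht : forall j, (j < M)%nat -> 0 < t j /\ beta_set (a j + d) (phi1 j) (phi2 j) (t j)).
    { intros j Hj; destruct (Hbe j Hj) as [Hpos Habove].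
      assert (be j < t j) by (unfold t; nra).
      split; [lra | now apply Habove]. }
    set (Q x := prodR M (fun j => t j * phi1 j x)).
    assert (HQpos : forall x, 0 < Q x).
    { intro x; apply prodR_pos; intros j Hj; apply Rmult_lt_0_compat; [apply Ht | apply Hphi1]; auto. }
    assert (HQ : Vbar (sumR M a) Q).
    { apply Vbar_prodR; intros j Hj; split; [apply Rlt_le, Ha, Hj|].
      apply Vbar_scal; [apply Rlt_le, Ht, Hj | apply V_Vbar, HV, Hj]. }
    assert (HQP2 : Vbar (sumR M a + d) (fun x => Q x - P2 x)).
    { apply (Vbar_prodR_sub M a d (fun j x => t j * phi1 j x) phi2); [unfold d; lra|].
      intros j Hj; destruct (HV j Hj) as [V1 V2]; destruct (Ht j Hj) as [Htj [_ Hsub]].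
      split; [apply Rlt_le, Ha, Hj|]; split; [|split].
      - apply Vbar_scal, V_Vbar; auto; lra.
      - now apply V_Vbar.
      - now apply V_Vbar. }
    split; [apply Rmult_lt_0_compat; [apply exp_pos | apply prodR_pos; intros; apply Hbe; auto]|].
    (* The strictly positive summand [(exp e - 1) * Q] upgrades [Q - P2] from [Vbar b] to [V b]. *)
    apply (V_ext b (fun x => (exp e - 1) * Q x + (Q x - P2 x))).
    { intro x; unfold Q, P1, t; rewrite prodR_mult, prodR_mult_exp.
      replace ((INR M + 1) * e) with (e + INR M * e) by ring; rewrite exp_plus; ring. }
    replace b with (sumR M a + d) by (unfold d; ring).
    apply (V_Vbar_plus (sumR M a)); auto.
    - unfold d; lra.
    - apply Vbar_scal; [lra | exact HQ].
    - intro x; apply Rmult_lt_0_compat; [lra | apply HQpos]. }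
  assert (HP : forall x, 0 < P1 x /\ 0 < P2 x).
  { intro x; split; apply prodR_pos; intros j Hj; [apply Hphi1 | eapply V_pos, HV]; auto. }
  destruct (beta_spec b P1 P2 _ (Hmem 1 Rlt_0_1) (proj1 (HP 0)) (proj2 (HP 0)))
    as [Hpos [Hle _]].
  split; [exact Hpos|].
  apply (le_of_le_exp_mul _ _ (INR M + 1)).
  - apply prodR_pos; intros; apply Hbe; auto.
  - pose proof (pos_INR M); lra.
  - intros e He; now apply Hle, Hmem.
Qed.

Lemma ln_beta_prodR_le M a phi1 phi2 b :
  (forall j, (j < M)%nat -> 0 < a j) ->
  (forall j, (j < M)%nat -> V (a j) (phi1 j) /\ V (a j) (phi2 j)) ->
  sumR M a < b ->
  ln (beta b (fun x => prodR M (fun j => phi1 j x)) (fun x => prodR M (fun j => phi2 j x)))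
    <= sumR M (fun j => ln (beta (a j + (b - sumR M a)) (phi1 j) (phi2 j))).
Proof.
  intros Ha HV Hb.
  destruct (beta_prodR_le M a phi1 phi2 b Ha HV Hb) as [Hpos Hle].
  rewrite <- ln_prodR; [now apply ln_le|].
  intros j Hj; destruct (HV j Hj); apply (beta_set_above (a j)); auto; lra.
Qed.

Theorem propositionA5 (M : nat) (a : nat -> R) (phi1 phi2 : nat -> R -> R) (b : R) :
  (forall j, (j < M)%nat -> 0 < a j) ->
  (forall j, (j < M)%nat -> V (a j) (phi1 j) /\ V (a j) (phi2 j)) ->
  sumR M a < b ->
  theta b (fun x => prodR M (fun j => phi1 j x)) (fun x => prodR M (fun j => phi2 j x))
  <= sumR M (fun j =>
       theta (b - sumR M (fun k => if Nat.eqb k j then 0 else a k)) (phi1 j) (phi2 j)).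
Proof.
  intros Ha HV Hb.
  rewrite (sumR_ext M _ (fun j => ln (beta (a j + (b - sumR M a)) (phi1 j) (phi2 j)) +
                                   ln (beta (a j + (b - sumR M a)) (phi2 j) (phi1 j)))).
  - unfold theta; rewrite sumR_plus.
    apply Rplus_le_compat; apply ln_beta_prodR_le; auto.
    intros j Hj; destruct (HV j Hj); auto.
  - intros j Hj; unfold theta; rewrite sumR_erase by exact Hj.
    now replace (b - (sumR M a - a j)) with (a j + (b - sumR M a)) by ring.
Qed.
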